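(* Let $\mathcal{H}$ be a finite-dimensional Hilbert space, let $\mathcal{E}:\mathcal{L}(\mathcal{H})\to\mathcal{L}(\mathcal{H})$ be a quantum channel, and let $\mathcal{C}\subseteq\mathcal{H}$ be a subspace with orthogonal projection $P_{\mathcal{C}}$. Then $\mathcal{C}$ is correctable for $\mathcal{E}$ if and only if there exist probabilities $p_i\ge 0$ with $\sum_i p_i=1$ and unitary operators $U_i$ on $\mathcal{H}$ such that the mixed unitary channel $\mathcal{F}(\rho)=\sum_i p_i U_i\rho U_i^\dagger$ satisfies $\mathcal{E}(\rho)=\mathcal{F}(\rho)$ for all $\rho\in\mathcal{L}(\mathcal{C})$, and $P_{\mathcal{C}}U_i^\dagger U_j P_{\mathcal{C}}=0$ for all $i\neq j$.
   Context: A quantum channel (quantum operation) on $\mathcal{L}(\mathcal{H})$ is a completely positive trace-preserving linear map; it has a Kraus representation $\mathcal{E}(\rho)=\sum_i E_i\rho E_i^\dagger$ with $\sum_i E_i^\dagger E_i=I$, written $\mathcal{E}\equiv\{E_i\}$. $\mathcal{L}(\mathcal{C})$ is identified with the operators $\rho$ on $\mathcal{H}$ with $\rho=P_{\mathcal{C}}\rho P_{\mathcal{C}}$. Write $\mathcal{P}_{\mathcal{C}}(\rho)=P_{\mathcal{C}}\rho P_{\mathcal{C}}$. A subspace $\mathcal{C}$ is correctable for $\mathcal{E}$ if there is a quantum channel $\mathcal{R}$ on $\mathcal{L}(\mathcal{H})$ with $\mathcal{R}\circ\mathcal{E}\circ\mathcal{P}_{\mathcal{C}}=\mathcal{P}_{\mathcal{C}}$.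 *)

(* Scalars: an arbitrary numClosedFieldType C (e.g. algC);
   the Hilbert space H is C^n, operators on H are 'M[C]_n. *)
From HB Require Import structures.
From mathcomp Require Import all_boot all_order all_algebra.
From mathcomp Require Import sesquilinear spectral.
Set Implicit Arguments. Unset Strict Implicit. Unset Printing Implicit Defensive.
Import Order.TTheory GRing.Theory Num.Theory.
Local Open Scope ring_scope.

Definition adjmx (C : numClosedFieldType) (n : nat) (A : 'M[C]_n) : 'M[C]_n :=
  (map_mx Num.conj A)^T.

Definition kraus_family (C : numClosedFieldType) (n m : nat)
  (E : 'I_m -> 'M[C]_n) : Prop :=
  \sum_(i < m) adjmx (E i) *m E i = 1%:M.

Definition kraus_apply (C : numClosedFieldType) (n m : nat)
  (E : 'I_m -> 'M[C]_n) (rho : 'M[C]_n) : 'M[C]_n :=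
  \sum_(i < m) E i *m rho *m adjmx (E i).

Definition orth_proj (C : numClosedFieldType) (n : nat) (P : 'M[C]_n) : Prop :=
  adjmx P = P /\ P *m P = P.

Definition proj_map (C : numClosedFieldType) (n : nat) (P rho : 'M[C]_n) : 'M[C]_n :=
  P *m rho *m P.

Definition in_LC (C : numClosedFieldType) (n : nat) (P rho : 'M[C]_n) : Prop :=
  rho = P *m rho *m P.

Definition correctable (C : numClosedFieldType) (n m : nat)
  (E : 'I_m -> 'M[C]_n) (P : 'M[C]_n) : Prop :=
  exists (k : nat) (R : 'I_k -> 'M[C]_n), kraus_family R /\
    forall rho : 'M[C]_n,
      kraus_apply R (kraus_apply E (proj_map P rho)) = proj_map P rho.

Definition mixed_unitary_apply (C : numClosedFieldType) (n k : nat)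
  (p : 'I_k -> C) (U : 'I_k -> 'M[C]_n) (rho : 'M[C]_n) : 'M[C]_n :=
  \sum_(i < k) p i *: (U i *m rho *m adjmx (U i)).

From HB Require Import structures.
From mathcomp Require Import all_boot all_order all_algebra.
From mathcomp Require Import sesquilinear spectral ring.
Import Order.TTheory GRing.Theory Num.Theory Num.Def.
Set Implicit Arguments. Unset Strict Implicit. Unset Printing Implicit Defensive.
Local Open Scope ring_scope.

(* Backward direction: if E = sum_i p_i U_i . U_i^* on L(C) and the spaces
   U_i C are mutually orthogonal, the operators P U_i^* together with the
   projection 1 - Q onto the complement of sum_i U_i C form a recovery
   channel (Section Recovery).

   Forward direction: a recovery channel R gives Kraus operators R_k E_i P of
   a channel equal to rho |-> P rho P, so each of them is a multiple of P
   (Gram rank-one lemma); this yields the Knill-Laflamme conditions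
   P E_i^* E_j P = alpha_ij P with alpha Hermitian.  Diagonalizing alpha by a
   unitary remixing of the Kraus operators gives operators F_s with
   P F_s^* F_t P = delta_st d_s P, d_s >= 0, sum_s d_s = 1.  Each F_s P is then
   sqrt(d_s) times a partial isometry with initial projection P, which extends
   to a unitary U_s; discarding the indices with d_s = 0 gives the mixture. *)

Section Adjoint.
Variable C : numClosedFieldType.

Definition ad m n (A : 'M[C]_(m, n)) : 'M[C]_(n, m) := (map_mx conjC A)^T.

Lemma adjmxE n (A : 'M[C]_n) : adjmx A = ad A. Proof. by []. Qed.

Lemma adE m n (A : 'M[C]_(m, n)) : (A ^t* )%sesqui = ad A.
Proof. by rewrite /ad map_trmx. Qed.

Lemma adM m n p (A : 'M[C]_(m, n)) (B : 'M[C]_(n, p)) :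
  ad (A *m B) = ad B *m ad A.
Proof. by rewrite /ad map_mxM trmx_mul. Qed.

Lemma adK m n (A : 'M[C]_(m, n)) : ad (ad A) = A.
Proof. by apply/matrixP => i j; rewrite !mxE conjCK. Qed.

Lemma adD m n (A B : 'M[C]_(m, n)) : ad (A + B) = ad A + ad B.
Proof. by apply/matrixP => i j; rewrite !mxE rmorphD. Qed.

Lemma adB m n (A B : 'M[C]_(m, n)) : ad (A - B) = ad A - ad B.
Proof. by apply/matrixP => i j; rewrite !mxE rmorphB. Qed.

Lemma adZ m n a (A : 'M[C]_(m, n)) : ad (a *: A) = a^* *: ad A.
Proof. by apply/matrixP => i j; rewrite !mxE rmorphM. Qed.

Lemma ad0 m n : ad (0 : 'M[C]_(m, n)) = 0.
Proof. by apply/matrixP => i j; rewrite !mxE rmorph0. Qed.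

Lemma ad1 n : ad (1%:M : 'M[C]_n) = 1%:M.
Proof. by apply/matrixP => i j; rewrite !mxE rmorph_nat eq_sym. Qed.

Lemma ad_sum m n I (r : seq I) (Pr : pred I) (F : I -> 'M[C]_(m, n)) :
  ad (\sum_(i <- r | Pr i) F i) = \sum_(i <- r | Pr i) ad (F i).
Proof. by elim/big_rec2: _ => [|i y1 y2 _ <-]; rewrite ?ad0 ?adD. Qed.

Lemma unitary_ad n (U : 'M[C]_n) :
  U \is unitarymx -> U *m ad U = 1%:M /\ ad U *m U = 1%:M.
Proof.
move=> hU; have h1 : U *m ad U = 1%:M by rewrite -adE; apply/unitarymxP.
by split => //; apply: mulmx1C.
Qed.

Lemma unitaryP n (U : 'M[C]_n) : ad U *m U = 1%:M -> U \is unitarymx.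
Proof. by move=> h; apply/unitarymxP; rewrite adE; apply: mulmx1C. Qed.

Lemma tr_adM m n (A : 'M[C]_(m, n)) :
  \tr (ad A *m A) = \sum_i \sum_j A j i * (A j i)^*.
Proof.
apply: eq_bigr => i _; rewrite mxE.
by apply: eq_bigr => j _; rewrite !mxE mulrC.
Qed.

Lemma tr_adM_ge0 m n (A : 'M[C]_(m, n)) : 0 <= \tr (ad A *m A).
Proof.
by rewrite tr_adM; do 2!apply: sumr_ge0 => ? _; apply: mul_conjC_ge0.
Qed.

Lemma tr_adM_eq0 m n (A : 'M[C]_(m, n)) : \tr (ad A *m A) = 0 -> A = 0.
Proof.
rewrite tr_adM => /eqP; rewrite psumr_eq0; last first.
  by move=> i _; apply: sumr_ge0 => j _; apply: mul_conjC_ge0.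
move=> /allP h; apply/matrixP => j i; rewrite mxE.
move: (h i (mem_index_enum _)); rewrite /= psumr_eq0; last first.
  by move=> k _; apply: mul_conjC_ge0.
by move=> /allP /(_ j (mem_index_enum _)) /=; rewrite mul_conjC_eq0 => /eqP.
Qed.

Lemma adM_eq0 m n (A : 'M[C]_(m, n)) : ad A *m A = 0 -> A = 0.
Proof. by move=> h; apply: tr_adM_eq0; rewrite h mxtrace0. Qed.

End Adjoint.

Lemma kraus_applyE (C : numClosedFieldType) n m (E : 'I_m -> 'M[C]_n) X :
  kraus_apply E X = \sum_i E i *m X *m ad (E i).
Proof. by []. Qed.

Lemma gram_rank_one (C : numClosedFieldType) (I J : finType)
    (x : I -> J -> C) (y : J -> C) :
  (forall a b, \sum_l x l a * (x l b)^* = y a * (y b)^*) ->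
  exists lam : I -> C, forall l a, x l a = lam l * y a.
Proof.
move=> h.
have sum0 (z : I -> C) : \sum_l z l * (z l)^* = 0 -> forall l, z l = 0.
  move=> /eqP; rewrite psumr_eq0; last by move=> l _; apply: mul_conjC_ge0.
  move=> /allP hz l; move: (hz l (mem_index_enum _)).
  by rewrite /= mul_conjC_eq0 => /eqP.
have [y0 | ] := boolP [forall a, y a == 0].
  exists (fun _ => 0) => l a; rewrite mul0r.
  by apply: (sum0 (fun l => x l a)); rewrite h (eqP (forallP y0 a)) mul0r.
rewrite negb_forall => /existsP [a0 ya0].
have cya0 : (y a0)^* != 0 by rewrite conjC_eq0.
pose lam l := x l a0 / y a0.
exists lam => l a; apply/eqP; rewrite -subr_eq0; apply/eqP; move: l.
apply: (sum0 (fun l => x l a - lam l * y a)).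
have e1 : \sum_l x l a * (lam l)^* = y a.
  under eq_bigr do rewrite rmorphM /= mulrA.
  by rewrite -mulr_suml h -mulrA fmorphV mulfV // mulr1.
have e2 : \sum_l lam l * (x l a)^* = (y a)^*.
  rewrite -e1 rmorph_sum; apply: eq_bigr => l _.
  by rewrite rmorphM /= conjCK mulrC.
have e3 : \sum_l lam l * (lam l)^* = 1.
  under eq_bigr do rewrite rmorphM /= fmorphV mulrACA.
  by rewrite -mulr_suml h mulrACA !mulfV // mul1r.
have expand l : (x l a - lam l * y a) * (x l a - lam l * y a)^* =
   x l a * (x l a)^* - (x l a * (lam l)^*) * (y a)^*
   - (lam l * (x l a)^*) * y a + (lam l * (lam l)^*) * (y a * (y a)^*).
  rewrite rmorphB rmorphM /=; ring.
under eq_bigr do rewrite expand.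
rewrite !big_split /= !sumrN -!mulr_suml e1 e2 e3 h mul1r.
by rewrite (mulrC (y a)^*) subrr sub0r addNr.
Qed.

(* Entries of X e_bd Y^*, used to probe a channel on matrix units. *)
Lemma delta_entry (C : numClosedFieldType) n (X Y : 'M[C]_n) a b c d :
  (X *m delta_mx b d *m ad Y) a c = X a b * (Y c d)^*.
Proof.
have h1 t : (X *m delta_mx b d) a t = X a b * (t == d)%:R.
  rewrite mxE (bigD1 b) //= big1 ?addr0 => [|u hu]; rewrite mxE.
    by rewrite eqxx.
  by rewrite (negbTE hu) mulr0.
rewrite mxE (bigD1 d) //= big1 ?addr0 => [|t ht].
  by rewrite h1 eqxx mulr1 !mxE.
by rewrite h1 (negbTE ht) mulr0 mul0r.
Qed.

Lemma kraus_of_conjugation (C : numClosedFieldType) n (I : finType)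
    (A : I -> 'M[C]_n) (B : 'M[C]_n) :
  (forall rho, \sum_l A l *m rho *m ad (A l) = B *m rho *m ad B) ->
  exists lam : I -> C, forall l, A l = lam l *: B.
Proof.
move=> hA.
have gram (a b : 'I_n * 'I_n) :
    \sum_l A l a.1 a.2 * (A l b.1 b.2)^* = B a.1 a.2 * (B b.1 b.2)^*.
  move: (congr1 (fun M : 'M[C]_n => M a.1 b.1) (hA (delta_mx a.2 b.2))).
  by rewrite /= summxE delta_entry => <-; apply: eq_bigr => l _; rewrite delta_entry.
have [lam hlam] := gram_rank_one gram.
by exists lam => l; apply/matrixP => a b; rewrite [RHS]mxE (hlam l (a, b)).
Qed.

Lemma correctable_KL (C : numClosedFieldType) n m
    (E : 'I_m -> 'M[C]_n) (P : 'M[C]_n) :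
  ad P = P -> P *m P = P -> correctable E P ->
  exists alpha : 'M[C]_m, ad alpha = alpha /\
    forall i j, P *m ad (E i) *m E j *m P = alpha i j *: P.
Proof.
move=> hPa hPP [kR [R [hR hrec]]].
pose A (l : 'I_kR * 'I_m) := R l.1 *m E l.2 *m P.
have hA rho : \sum_l A l *m rho *m ad (A l) = P *m rho *m ad P.
  rewrite hPa -[RHS]hrec /kraus_apply /proj_map.
  rewrite [RHS](eq_bigr (fun k => \sum_i A (k, i) *m rho *m ad (A (k, i)))) ?pair_big //.
  move=> k _; rewrite mulmx_sumr mulmx_suml; apply: eq_bigr => i _.
  by rewrite /A !adM hPa !adjmxE !mulmxA.
have [lam hlam] := kraus_of_conjugation hA.
exists (\matrix_(i, j) \sum_k (lam (k, i))^* * lam (k, j)); split.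
  apply/matrixP => i j; rewrite !mxE rmorph_sum; apply: eq_bigr => k _.
  by rewrite rmorphM /= conjCK mulrC.
move=> i j; rewrite -[ad (E i)]mulmx1 -hR !mulmx_sumr !mulmx_suml mxE scaler_suml.
apply: eq_bigr => k _.
transitivity (ad (A (k, i)) *m A (k, j)); first by rewrite /A !adM hPa !mulmxA.
by rewrite !hlam adZ -scalemxAl -scalemxAr hPa scalerA hPP.
Qed.

Section Projections.
Variable C : numClosedFieldType.

Lemma proj_decomp n (P : 'M[C]_n) :
  ad P = P -> P *m P = P ->
  exists r (X : 'M[C]_(r, n)), X *m ad X = 1%:M /\ P = ad X *m X.
Proof.
move=> hPa hPP; pose X := schmidt (row_base P).
exists (\rank P), X.
have hXu : X *m ad X = 1%:M.
  by rewrite -adE; apply/unitarymxP; apply: schmidt_unitarymx; apply: rank_leq_col.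
split => //.
have eX : (X :=: P)%MS.
  by apply: eqmx_trans (eq_row_base P); apply: eqmx_schmidt_free; apply: row_base_free.
have XP : (X <= P)%MS by rewrite eX.
have PX : (P <= X)%MS by rewrite eX.
have hXP : X *m P = X.
  by rewrite -{1}(mulmxKpV XP) -[_ *m P *m P]mulmxA hPP mulmxKpV.
have hPXa : P *m ad X = ad X by have := congr1 (@ad _ _ _) hXP; rewrite adM hPa.
transitivity (P *m (ad X *m X)); last by rewrite mulmxA hPXa.
by rewrite -{2}(mulmxKpV PX) -[RHS]mulmxA (mulmxA X) hXu mul1mx mulmxKpV.
Qed.

Lemma proj_compl n (P : 'M[C]_n) :
  ad P = P -> P *m P = P ->
  ad (1%:M - P) = 1%:M - P /\ (1%:M - P) *m (1%:M - P) = 1%:M - P.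
Proof.
move=> hPa hPP; rewrite adB ad1 hPa; split => //.
by rewrite mulmxBl !mulmxBr mul1mx mulmx1 mul1mx hPP subrr subr0.
Qed.

Lemma partial_isometry_extend n (P V : 'M[C]_n) :
  ad P = P -> P *m P = P -> ad V *m V = P ->
  exists U, U \is unitarymx /\ U *m P = V.
Proof.
move=> hPa hPP hV.
have hVP : V *m P = V.
  apply/eqP; rewrite -subr_eq0; apply/eqP; apply: adM_eq0.
  rewrite adB adM hPa mulmxBl !mulmxBr !mulmxA hV.
  have -> : P *m ad V *m V = P by rewrite -mulmxA hV hPP.
  by rewrite hPP !subrr.
pose Q := V *m ad V.
have hQa : ad Q = Q by rewrite adM adK.
have hQQ : Q *m Q = Q by rewrite mulmxA -(mulmxA V) hV hVP.
have [hPca hPcc] := proj_compl hPa hPP.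
have [hQca hQcc] := proj_compl hQa hQQ.
have [r [X [hX eX]]] := proj_decomp hPca hPcc.
have [r' [Y [hY eY]]] := proj_decomp hQca hQcc.
have trr : r = r'.
  apply/eqP; rewrite -(eqr_nat C); apply/eqP.
  have t1 : \tr (1%:M - P) = r%:R by rewrite eX mxtrace_mulC hX mxtrace1.
  have t2 : \tr (1%:M - Q) = r'%:R by rewrite eY mxtrace_mulC hY mxtrace1.
  by rewrite -t1 -t2 !linearB /= mxtrace_mulC hV.
subst r'.
(* the rows of X span ker P and the rows of Y span ker Q = ker V^* *)
have XP : X *m P = 0.
  have XX : X *m (ad X *m X) = X by rewrite mulmxA hX mul1mx.
  by rewrite -XX -eX -mulmxA mulmxBl mul1mx hPP subrr mulmx0.
have YV : Y *m V = 0.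
  have YY : Y *m (ad Y *m Y) = Y by rewrite mulmxA hY mul1mx.
  have YQ : Y *m Q = 0 by rewrite -YY -eY -mulmxA mulmxBl mul1mx hQQ subrr mulmx0.
  by rewrite -hVP -hV !mulmxA -(mulmxA Y V) YQ !mul0mx.
exists (V + ad Y *m X); split; last first.
  by rewrite mulmxDl hVP -mulmxA XP mulmx0 addr0.
apply: unitaryP; rewrite adD adM adK mulmxDl !mulmxDr.
rewrite mulmxA -adM YV ad0 mul0mx -mulmxA YV mulmx0 addr0 add0r.
by rewrite hV -mulmxA (mulmxA Y) hY mul1mx -eX addrC subrK.
Qed.

End Projections.

Lemma sum_kronecker (R : nzRingType) (V : lmodType R) k (i : 'I_k) (F : 'I_k -> V) :
  \sum_j (i == j)%:R *: F j = F i.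
Proof.
rewrite (bigD1 i) //= eqxx scale1r big1 ?addr0 // => j hj.
by rewrite eq_sym (negbTE hj) scale0r.
Qed.

Lemma sum_over_support (I : finType) (V : nmodType) (S : pred I) (f : I -> V) :
  (forall i, i \notin S -> f i = 0) ->
  \sum_i f i = \sum_(j < #|S|) f (enum_val j).
Proof.
by move=> f0; rewrite -big_enum_val [LHS](bigID [in S]) /= [X in _ + X]big1 ?addr0.
Qed.

Section Code.
Variables (C : numClosedFieldType) (n : nat) (P : 'M[C]_n).
Hypotheses (hPa : ad P = P) (hPP : P *m P = P).

Lemma proj_map_in_LC rho : in_LC P (proj_map P rho).
Proof. by rewrite /in_LC /proj_map !mulmxA hPP -(mulmxA _ P P) hPP. Qed.

Lemma proj_tr_gt0 : P != 0 -> 0 < \tr P.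
Proof.
move=> hP0; rewrite -{1}hPP -{1}hPa lt_def tr_adM_ge0 andbT.
by apply/eqP => /tr_adM_eq0 /eqP; apply/negP.
Qed.

Lemma code_weight_ge0 (A : 'M[C]_n) d :
  P != 0 -> P *m ad A *m A *m P = d *: P -> 0 <= d.
Proof.
move=> hP0 /(congr1 mxtrace); rewrite linearZ /= => e.
rewrite -(pmulr_lge0 _ (proj_tr_gt0 hP0)) -e -{1}hPa -adM -mulmxA.
exact: tr_adM_ge0.
Qed.

Lemma polar_on_code (F : 'M[C]_n) d :
  P *m ad F *m F *m P = d *: P -> 0 <= d ->
  exists U, U \is unitarymx /\ F *m P = sqrtC d *: (U *m P).
Proof.
move=> hF d_ge0; have [d0 | dn0] := eqVneq d 0.
  exists 1%:M; split; first by apply: unitaryP; rewrite ad1 mul1mx.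
  rewrite d0 sqrtC0 scale0r; apply: adM_eq0.
  by rewrite adM hPa !mulmxA hF d0 scale0r.
have sd0 : sqrtC d != 0 by rewrite sqrtC_eq0.
have cR : ((sqrtC d)^-1)^* = (sqrtC d)^-1.
  by apply/conj_Creal/ger0_real; rewrite invr_ge0 sqrtC_ge0.
pose V := (sqrtC d)^-1 *: (F *m P).
have hV : ad V *m V = P.
  rewrite adZ cR -scalemxAl -scalemxAr scalerA adM hPa !mulmxA hF.
  by rewrite scalerA -invfM -expr2 sqrtCK mulVf // scale1r.
have [U [hU hUP]] := partial_isometry_extend hPa hPP hV.
by exists U; split => //; rewrite hUP scalerA mulfV // scale1r.
Qed.

Lemma polar_conj (F U : 'M[C]_n) d rho :
  0 <= d -> F *m P = sqrtC d *: (U *m P) -> in_LC P rho ->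
  F *m rho *m ad F = d *: (U *m rho *m ad U).
Proof.
move=> d_ge0 hFU hr.
have sdR : (sqrtC d)^* = sqrtC d by apply/conj_Creal/ger0_real; rewrite sqrtC_ge0.
have conjP (A : 'M[C]_n) : A *m rho *m ad A = (A *m P) *m rho *m ad (A *m P).
  by rewrite {1}hr adM hPa !mulmxA.
rewrite conjP hFU adZ sdR -scalemxAl -scalemxAr -scalemxAl scalerA.
by rewrite -expr2 sqrtCK -conjP.
Qed.

Lemma KL_trace_one m (E : 'I_m -> 'M[C]_n) (alpha : 'M[C]_m) :
  kraus_family E -> P != 0 ->
  (forall i j, P *m ad (E i) *m E j *m P = alpha i j *: P) ->
  \sum_i alpha i i = 1.
Proof.
move=> hE hP0 hkl.
have e : (\sum_i alpha i i) *: P = 1 *: P.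
  rewrite scale1r scaler_suml.
  transitivity (P *m (\sum_i adjmx (E i) *m E i) *m P); last by rewrite hE mulmx1 hPP.
  rewrite mulmx_sumr mulmx_suml; apply: eq_bigr => i _.
  by rewrite -hkl !mulmxA.
by apply/eqP; move/eqP: e; rewrite -subr_eq0 -scalerBl scaler_eq0 (negbTE hP0) orbF subr_eq0.
Qed.

End Code.

Lemma kraus_unitary_mix (C : numClosedFieldType) n m
    (E : 'I_m -> 'M[C]_n) (M : 'M[C]_m) X :
  ad M *m M = 1%:M ->
  kraus_apply (fun s => \sum_i (M s i)^* *: E i) X = kraus_apply E X.
Proof.
move=> hM; rewrite !kraus_applyE.
transitivity (\sum_s \sum_i \sum_j ((M s i)^* * M s j) *: (E i *m X *m ad (E j))).
  apply: eq_bigr => s _; rewrite ad_sum mulmx_suml mulmx_suml.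
  apply: eq_bigr => i _; rewrite mulmx_sumr; apply: eq_bigr => j _.
  by rewrite adZ conjCK -scalemxAl -scalemxAr -scalemxAl scalerA mulrC.
rewrite exchange_big; apply: eq_bigr => i _; rewrite exchange_big /=.
have orth j : \sum_s (M s i)^* * M s j = (i == j)%:R.
  move: (congr1 (fun A : 'M[C]_m => A i j) hM); rewrite /= !mxE => <-.
  by apply: eq_bigr => s _; rewrite !mxE.
under eq_bigr do rewrite -scaler_suml orth.
exact: sum_kronecker.
Qed.

Lemma KL_diagonalize (C : numClosedFieldType) n m
    (E : 'I_m -> 'M[C]_n) (P : 'M[C]_n) (alpha : 'M[C]_m) :
  ad alpha = alpha ->
  (forall i j, P *m ad (E i) *m E j *m P = alpha i j *: P) ->
  exists (F : 'I_m -> 'M[C]_n) (d : 'I_m -> C),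
    [/\ forall X, kraus_apply E X = kraus_apply F X,
        \sum_s d s = \sum_i alpha i i,
        forall s, P *m ad (F s) *m F s *m P = d s *: P &
        forall s t, s != t -> P *m ad (F s) *m F t *m P = 0].
Proof.
move=> ha hkl.
have hnorm : alpha \is normalmx by apply/normalmxP; rewrite adE ha.
pose M := spectralmx alpha; pose D := diag_mx (spectral_diag alpha).
have hMu : M \is unitarymx := spectral_unitarymx alpha.
have [MadM adMM] := unitary_ad hMu.
have hD : M *m alpha *m ad M = D.
  have hsp : alpha = ad M *m D *m M.
    by move/orthomx_spectralP: hnorm; rewrite invmx_unitary // adE.
  by rewrite hsp !mulmxA MadM mul1mx -mulmxA MadM mulmx1.
pose F s := \sum_i (M s i)^* *: E i.
have klF s t : P *m ad (F s) *m F t *m P = D s t *: P.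
  transitivity (\sum_j \sum_i ((M s i * (M t j)^*) * alpha i j) *: P).
    rewrite ad_sum mulmx_sumr !mulmx_suml; apply: eq_bigr => j _.
    rewrite mulmx_sumr !mulmx_suml; apply: eq_bigr => i _.
    rewrite adZ conjCK -!scalemxAr -!scalemxAl hkl !scalerA.
    by congr (_ *: _); ring.
  under eq_bigr do rewrite -scaler_suml.
  rewrite -scaler_suml -hD; congr (_ *: _); rewrite mxE.
  apply: eq_bigr => j _; rewrite !mxE mulr_suml; apply: eq_bigr => i _.
  by rewrite mulrAC.
exists F, (fun s => spectral_diag alpha 0 s); split.
- by move=> X; rewrite kraus_unitary_mix.
- by rewrite -mxtrace_diag -/D -hD -mulmxA mxtrace_mulC -mulmxA adMM mulmx1.
- by move=> s; rewrite klF mxE eqxx mulr1n.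
- by move=> s t hst; rewrite klF mxE (negbTE hst) mulr0n scale0r.
Qed.

Lemma correctable_mixed_unitary (C : numClosedFieldType) n m
    (E : 'I_m -> 'M[C]_n) (P : 'M[C]_n) :
  kraus_family E -> ad P = P -> P *m P = P -> P != 0 -> correctable E P ->
  exists (k : nat) (p : 'I_k -> C) (U : 'I_k -> 'M[C]_n),
    [/\ (forall i, 0 <= p i),
        \sum_(i < k) p i = 1,
        (forall i, U i \is unitarymx),
        (forall rho : 'M[C]_n, in_LC P rho ->
           kraus_apply E rho = mixed_unitary_apply p U rho) &
        (forall i j : 'I_k, i != j -> P *m adjmx (U i) *m U j *m P = 0)].
Proof.
move=> hE hPa hPP hP0 hc.
have [alpha [ha hkl]] := correctable_KL hPa hPP hc.
have [F [d [hEF hsum hdiag hoff]]] := KL_diagonalize ha hkl.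
have d_ge0 s : 0 <= d s := code_weight_ge0 hPa hPP hP0 (hdiag s).
have d_sum : \sum_s d s = 1 by rewrite hsum (KL_trace_one hPP hE hP0 hkl).
have [U hU] := fin_all_exists (fun s => polar_on_code hPa hPP (hdiag s) (d_ge0 s)).
pose S := [pred s | d s != 0].
have outS (V : nmodType) (f : 'I_m -> V) :
    (forall s, d s = 0 -> f s = 0) -> \sum_s f s = \sum_(j < #|S|) f (enum_val j).
  by move=> f0; apply: sum_over_support => s; rewrite inE negbK => /eqP /f0.
exists #|S|, (fun j => d (enum_val j)), (fun j => U (enum_val j)); split.
- by move=> j; apply: d_ge0.
- by rewrite -d_sum (outS _ d).
- by move=> j; have [] := hU (enum_val j).
- move=> rho hr.
  have conj_s s : F s *m rho *m ad (F s) = d s *: (U s *m rho *m ad (U s)).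
    exact (polar_conj hPa (d_ge0 s) (proj2 (hU s)) hr).
  rewrite hEF kraus_applyE; under eq_bigr do rewrite conj_s.
  by rewrite (outS _ (fun s => d s *: (U s *m rho *m ad (U s)))) // => s ->; rewrite scale0r.
- move=> j j' hjj'.
  have hst : enum_val j != enum_val j' by apply: contra hjj' => /eqP /enum_val_inj ->.
  have hUP (s : 'I_m) : s \in S -> U s *m P = (sqrtC (d s))^-1 *: (F s *m P).
    by rewrite inE => ds0; rewrite (proj2 (hU s)) scalerA mulVf ?scale1r // sqrtC_eq0.
  have -> : P *m adjmx (U (enum_val j)) = ad (U (enum_val j) *m P) by rewrite adM hPa.
  rewrite -mulmxA !hUP ?enum_valP // adZ -scalemxAl -scalemxAr adM hPa !mulmxA.
  by rewrite hoff // !scaler0.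
Qed.

Lemma code_orthonormal (C : numClosedFieldType) n k
    (P : 'M[C]_n) (U : 'I_k -> 'M[C]_n) :
  P *m P = P -> (forall i, U i \is unitarymx) ->
  (forall i j, i != j -> P *m adjmx (U i) *m U j *m P = 0) ->
  forall i j, P *m ad (U i) *m U j *m P = (i == j)%:R *: P.
Proof.
move=> hPP hU horth i j; have [<- | hij] := eqVneq i j; last by rewrite scale0r horth.
by have [_ h] := unitary_ad (hU i); rewrite scale1r -(mulmxA P) h mulmx1 hPP.
Qed.

Section Recovery.
Variables (C : numClosedFieldType) (n k : nat) (P : 'M[C]_n) (U : 'I_k -> 'M[C]_n).
Hypotheses (hPa : ad P = P) (hPP : P *m P = P).
Hypothesis orthonormal : forall i j, P *m ad (U i) *m U j *m P = (i == j)%:R *: P.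

Definition code_span_proj : 'M[C]_n := \sum_i U i *m P *m ad (U i).
Local Notation Q := code_span_proj.

Lemma code_span_projU l : Q *m U l *m P = U l *m P.
Proof.
rewrite mulmx_suml mulmx_suml.
under eq_bigr do rewrite -!mulmxA (mulmxA P) (mulmxA _ (U l)) orthonormal -scalemxAr eq_sym.
exact: sum_kronecker.
Qed.

Lemma code_span_proj_adj : ad Q = Q.
Proof. by rewrite ad_sum; apply: eq_bigr => i _; rewrite !adM adK hPa mulmxA. Qed.

Lemma code_span_proj_idem : Q *m Q = Q.
Proof.
rewrite {2}/code_span_proj mulmx_sumr; apply: eq_bigr => i _.
by rewrite !mulmxA code_span_projU.
Qed.

(* Kraus operators of the recovery channel: P U_j^* decodes the j-th image of
   the code, and 1 - Q completes the family to a channel. *)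
Definition recovery_op (i : 'I_k.+1) : 'M[C]_n :=
  if unlift ord_max i is Some j then P *m ad (U j) else 1%:M - Q.

Lemma recovery_op_widen (j : 'I_k) :
  recovery_op (widen_ord (leqnSn k) j) = P *m ad (U j).
Proof.
have -> : widen_ord (leqnSn k) j = lift ord_max j.
  by apply: val_inj; rewrite /= /bump leqNgt ltn_ord.
by rewrite /recovery_op liftK.
Qed.

Lemma recovery_op_max : recovery_op ord_max = 1%:M - Q.
Proof. by rewrite /recovery_op unlift_none. Qed.

Lemma recovery_kraus : kraus_family recovery_op.
Proof.
rewrite /kraus_family big_ord_recr /= recovery_op_max.
under eq_bigr do rewrite recovery_op_widen adjmxE adM adK hPa -!mulmxA (mulmxA P) hPP mulmxA.
rewrite adjmxE adB ad1 code_span_proj_adj mulmxBl !mulmxBr mul1mx mulmx1 mul1mx.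
by rewrite code_span_proj_idem subrr subr0 addrC subrK.
Qed.

(* The recovery channel undoes the mixture on L(C): each decoder P U_i^*
   sees only its own branch, and 1 - Q annihilates every branch. *)
Lemma recovery_inverts (p : 'I_k -> C) rho : in_LC P rho ->
  kraus_apply recovery_op (mixed_unitary_apply p U rho) = (\sum_i p i) *: rho.
Proof.
move=> hr; rewrite kraus_applyE big_ord_recr /= recovery_op_max.
have outside : (1%:M - Q) *m mixed_unitary_apply p U rho = 0.
  rewrite mulmx_sumr big1 // => l _; rewrite -scalemxAr.
  have -> : (1%:M - Q) *m (U l *m rho *m adjmx (U l)) =
      (1%:M - Q) *m U l *m P *m rho *m P *m ad (U l) by rewrite {1}hr !mulmxA.
  by rewrite !mulmxBl mul1mx code_span_projU subrr scaler0.
have decode i l : P *m ad (U i) *m (U l *m rho *m adjmx (U l)) *m ad (P *m ad (U i))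
    = (i == l)%:R *: rho.
  rewrite adM adK hPa.
  transitivity ((P *m ad (U i) *m U l *m P) *m rho *m (P *m ad (U l) *m U i *m P)).
    by rewrite {1}hr !mulmxA.
  rewrite !orthonormal (eq_sym l i); case: (i == l).
    by rewrite !scale1r -hr.
  by rewrite !scale0r mul0mx mulmx0.
under eq_bigr do rewrite recovery_op_widen.
rewrite outside mul0mx addr0 scaler_suml; apply: eq_bigr => i _.
rewrite /mixed_unitary_apply mulmx_sumr mulmx_suml.
under eq_bigr do rewrite -scalemxAr -scalemxAl decode scalerA mulrC -scalerA.
exact: sum_kronecker.
Qed.

End Recovery.

Lemma mixed_unitary_correctable (C : numClosedFieldType) n m k
    (E : 'I_m -> 'M[C]_n) (P : 'M[C]_n) (p : 'I_k -> C) (U : 'I_k -> 'M[C]_n) :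
  ad P = P -> P *m P = P -> \sum_i p i = 1 -> (forall i, U i \is unitarymx) ->
  (forall rho, in_LC P rho -> kraus_apply E rho = mixed_unitary_apply p U rho) ->
  (forall i j, i != j -> P *m adjmx (U i) *m U j *m P = 0) ->
  correctable E P.
Proof.
move=> hPa hPP hp1 hU hEF horth.
have orth := code_orthonormal hPP hU horth.
exists k.+1, (recovery_op P U); split; first exact: recovery_kraus hPa hPP orth.
move=> rho; have hr := proj_map_in_LC hPP rho.
by rewrite hEF // (recovery_inverts hPa orth) // hp1 scale1r.
Qed.

Lemma zero_code_mixed_unitary (C : numClosedFieldType) n m
    (E : 'I_m -> 'M[C]_n) (P : 'M[C]_n) :
  P = 0 ->
  exists (k : nat) (p : 'I_k -> C) (U : 'I_k -> 'M[C]_n),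
    [/\ (forall i, 0 <= p i),
        \sum_(i < k) p i = 1,
        (forall i, U i \is unitarymx),
        (forall rho : 'M[C]_n, in_LC P rho ->
           kraus_apply E rho = mixed_unitary_apply p U rho) &
        (forall i j : 'I_k, i != j -> P *m adjmx (U i) *m U j *m P = 0)].
Proof.
move=> ->; exists 1%N, (fun _ => 1), (fun _ => 1%:M); split.
- by move=> _; apply: ler01.
- by rewrite big_ord1.
- by move=> _; apply: unitaryP; rewrite ad1 mul1mx.
- move=> rho; rewrite /in_LC mulmx0 => ->.
  by rewrite /kraus_apply /mixed_unitary_apply !big1 // => i _; rewrite ?mulmx0 ?mul0mx ?scaler0.
- by move=> i j; rewrite (ord1 i) (ord1 j) eqxx.
Qed.

Unset Implicit Arguments.
Theorem lemma1 (C : numClosedFieldType) (n m : nat)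
  (E : 'I_m -> 'M[C]_n) (P : 'M[C]_n)
  (hE : kraus_family E) (hP : orth_proj P) :
  correctable E P <->
  exists (k : nat) (p : 'I_k -> C) (U : 'I_k -> 'M[C]_n),
    [/\ (forall i, 0 <= p i),
        \sum_(i < k) p i = 1,
        (forall i, U i \is unitarymx),
        (forall rho : 'M[C]_n, in_LC P rho ->
           kraus_apply E rho = mixed_unitary_apply p U rho) &
        (forall i j : 'I_k, i != j -> P *m adjmx (U i) *m U j *m P = 0)].
Proof.
have [hPa hPP] := hP; rewrite adjmxE in hPa.
split => [hc | [k [p [U [_ hp1 hU hEF horth]]]]].
- have [P0 | hP0] := eqVneq P 0; first exact: zero_code_mixed_unitary.
  exact: correctable_mixed_unitary hE hPa hPP hP0 hc.
- exact: mixed_unitary_correctable hPa hPP hp1 hU hEF horth.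
Qed.
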